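(* Suppose $\widehat{\mathcal L}^{Y\text{-}A\text{-}B}$-uniform-monotonicity holds for the SCC $F$. Let $(i,\theta)\in\mathcal I\times\Theta$. If $F(\theta)\subseteq\arg\min_{z\in Z^*}u_i^\theta(z)$ and $Z^*\cap\mathcal L_i^Z(F(\theta),\theta)$ is an $i$-$Z^*$-max set, then $\Xi_i(\theta)\ne\emptyset$.
   Context: Standing setup: $\mathcal I=\{1,\dots,I\}$ finite, $I\ge 3$; $\Theta$ finite or countably infinite; $Z$ finite; $Y=\Delta(Z)$; $F:\Theta\to 2^Z\setminus\{\emptyset\}$; $u_i^\theta:Z\to\mathbb R$, $U_i^\theta(y)=\sum_zy_zu_i^\theta(z)$; $\mathcal L_i^Y(\alpha,\theta)=\{y\in Y:U_i^\theta(\alpha)\ge U_i^\theta(y)\}$, $\mathcal L_i^Z(\alpha,\theta)=\{z\in Z:U_i^\theta(\alpha)\ge u_i^\theta(z)\}$, $\mathcal L_i^Z(E,\theta)=\bigcap_{z\in E}\mathcal L_i^Z(z,\theta)$; UNIF$(E)$ is the uniform lottery on $E$. A nonempty $E\subseteq Z$ is an $i$-max set if for some $\theta$, $E\subseteq\arg\max_{z\in E}u_i^\theta(z)$ and $E\subseteq\arg\max_{z\in Z}u_j^\theta(z)$ for all $j\ne i$. $Z^*=\bigcup_\theta F(\theta)$ if $Z$ is an $i$-max set for some $i$, else $Z^*=Z$. A nonempty $E\subseteq Z^*$ is an $i$-$Z^*$-$\theta$-max set if $E\subseteq\arg\max_{z\in E}u_i^\theta(z)$ and $E\subseteq\arg\max_{z\in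 Z^*}u_j^\theta(z)$ for all $j\ne i$; $\Lambda^i(E)=\{\theta:E\text{ is an }i\text{-}Z^*\text{-}\theta\text{-max set}\}$ ($=\emptyset$ for $E=\emptyset$); $E$ is an $i$-$Z^*$-max set if $\Lambda^i(E)\ne\emptyset$. $\Theta_i^\theta=\{\theta':F(\theta)\text{ is an }i\text{-}Z^*\text{-}\theta'\text{-max set and }F(\theta)\subseteq F(\theta')\}$; $\Xi_i(\theta)=\{K\subseteq\Theta_i^\theta,K\ne\emptyset:\Theta_i^\theta\cap\Lambda^i(Z^*\cap\mathcal L_i^Z(F(\theta),\theta)\cap\bigcap_{\theta'\in K}F(\theta'))=K\}$. $\widehat{\mathcal L}_i^{Y\text{-}A\text{-}B}(\mathrm{UNIF}[F(\theta)],\theta)=\Delta[Z^*\cap\mathcal L_i^Z(F(\theta),\theta)\cap\bigcup_{K\in\Xi_i(\theta)}\bigcap_{\theta'\in K}F(\theta')]$ if $F(\theta)\subseteq\arg\min_{z\in Z^*}u_i^\theta(z)$, $\Xi_i(\theta)\ne\emptyset$ and $Z^*\cap\mathcal L_i^Z(F(\theta),\theta)$ is an $i$-$Z^*$-max set; otherwise $\Delta(Z^* )\cap\mathcal L_i^Y(\mathrm{UNIF}[F(\theta)],\theta)$. $\widehat{\mathcal L}^{Y\text{-}A\text{-}B}$-uniform-monotonicity: for all $\theta,\theta'$, [$\widehat{\mathcal L}_i^{Y\text{-}A\text{-}B}(\mathrm{UNIF}[F(\theta)],\theta)\subseteq\mathcal L_i^Y(\mathrm{UNIF}[F(\theta)],\theta')$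 for all $i$] implies $F(\theta)\subseteq F(\theta')$. *)

From mathcomp Require Import all_boot all_order all_algebra.
Set Implicit Arguments. Unset Strict Implicit. Unset Printing Implicit Defensive.
Import Order.TTheory GRing.Theory Num.Theory.
Local Open Scope ring_scope.

(* Subsets of Z / Th other than F(theta) are
   Prop-valued predicates. *)

Section Defs.
Context {R : realFieldType} {I : finType} {Th : countType} {Z : finType}.
Variable F : Th -> {set Z}.
Variable u : I -> Th -> Z -> R.

Definition is_lottery (y : {ffun Z -> R}) : Prop :=
  (forall z, 0 <= y z) /\ \sum_z y z = 1.

Definition inDelta (E : Z -> Prop) (y : {ffun Z -> R}) : Prop :=
  is_lottery y /\ (forall z, y z != 0 -> E z).

Definition EU (i : I) (t : Th) (y : {ffun Z -> R}) : R :=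
  \sum_z y z * u i t z.

Definition UNIF (E : {set Z}) : {ffun Z -> R} :=
  [ffun z => if z \in E then (#|E|%:R)^-1 else 0].

Definition LY (i : I) (alpha : {ffun Z -> R}) (t : Th) (y : {ffun Z -> R}) : Prop :=
  is_lottery y /\ EU i t y <= EU i t alpha.

Definition LZset (i : I) (E : {set Z}) (t : Th) (z' : Z) : Prop :=
  forall z, z \in E -> u i t z' <= u i t z.

Definition imax_set (i : I) (E : Z -> Prop) : Prop :=
  (exists z, E z) /\
  exists t, (forall z, E z -> forall z', E z' -> u i t z' <= u i t z) /\
            (forall j, j != i -> forall z, E z -> forall z', u j t z' <= u j t z).

Definition Zstar (z : Z) : Prop :=
  ((exists i, imax_set i (fun _ => True)) /\ (exists t, z \in F t)) \/
  (~ (exists i, imax_set i (fun _ => True))).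

Definition iZt_max (i : I) (E : Z -> Prop) (t : Th) : Prop :=
  (exists z, E z) /\ (forall z, E z -> Zstar z) /\
  (forall z, E z -> forall z', E z' -> u i t z' <= u i t z) /\
  (forall j, j != i -> forall z, E z -> forall z', Zstar z' -> u j t z' <= u j t z).

Definition Lambda (i : I) (E : Z -> Prop) (t : Th) : Prop := iZt_max i E t.

Definition iZ_max (i : I) (E : Z -> Prop) : Prop := exists t, Lambda i E t.

Definition Theta_it (i : I) (t t' : Th) : Prop :=
  iZt_max i (fun z => z \in F t) t' /\ F t \subset F t'.

Definition XiSet (i : I) (t : Th) (K : Th -> Prop) (z : Z) : Prop :=
  Zstar z /\ LZset i (F t) t z /\ (forall t', K t' -> z \in F t').

Definition inXi (i : I) (t : Th) (K : Th -> Prop) : Prop :=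
  (forall t', K t' -> Theta_it i t t') /\ (exists t', K t') /\
  (forall t', (Theta_it i t t' /\ Lambda i (XiSet i t K) t') <-> K t').

Definition Xi_nonempty (i : I) (t : Th) : Prop := exists K, inXi i t K.

Definition F_in_argmin (i : I) (t : Th) : Prop :=
  forall z, z \in F t -> Zstar z /\ (forall z', Zstar z' -> u i t z <= u i t z').

Definition hatL_cond (i : I) (t : Th) : Prop :=
  F_in_argmin i t /\ Xi_nonempty i t /\
  iZ_max i (fun z => Zstar z /\ LZset i (F t) t z).

Definition hatL (i : I) (t : Th) (y : {ffun Z -> R}) : Prop :=
  (hatL_cond i t /\
    inDelta (fun z => Zstar z /\ LZset i (F t) t z /\
                      exists K, inXi i t K /\ forall t', K t' -> z \in F t') y) \/
  (~ hatL_cond i t /\ inDelta Zstar y /\ LY i (UNIF (F t)) t y).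

Definition hatL_uniform_monotonicity : Prop :=
  forall t t', (forall i y, hatL i t y -> LY i (UNIF (F t)) t' y) ->
               F t \subset F t'.

End Defs.

(* Let E = Z* ∩ L_i^Z(F t, t).  If Xi_i(t) were empty, the hat-lower-contour
   sets at t would be the ordinary ones, and uniform monotonicity would then
   give F t ⊆ F t' whenever E is i-Z*-t'-max; so every such t' lies in
   Theta_i^t.  Starting from K = Lambda^i(E), the map
   K |-> Theta_i^t ∩ Lambda^i(Z* ∩ L_i^Z(F t, t) ∩ ⋂_{t' ∈ K} F t')
   only enlarges K and shrinks the finite intersection set, so it reaches a
   fixed point, which is an element of Xi_i(t): a contradiction. *)
From mathcomp Require Import all_boot all_order all_algebra.
From mathcomp Require Import boolp.
Import Order.TTheory GRing.Theory Num.Theory.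

Section Lotteries.
Local Open Scope ring_scope.
Context {R : realFieldType} {Z : finType}.
Implicit Types (x y : {ffun Z -> R}) (f : Z -> R) (c : R).

Lemma lottery_sum_le {y f c} :
  is_lottery y -> (forall z, y z != 0 -> f z <= c) -> \sum_z y z * f z <= c.
Proof.
move=> [y_ge0 y_sum1] fc; rewrite -[c]mul1r -y_sum1 mulr_suml.
apply: ler_sum => z _; have [->|yz] := eqVneq (y z) 0; first by rewrite !mul0r.
by rewrite ler_wpM2l // fc.
Qed.

Lemma lottery_sum_ge {y f c} :
  is_lottery y -> (forall z, y z != 0 -> c <= f z) -> c <= \sum_z y z * f z.
Proof.
move=> ly cf; rewrite -lerN2 -sumrN.
under eq_bigr => z _ do rewrite -mulrN.
by apply: lottery_sum_le => // z /cf; rewrite lerN2.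
Qed.

Lemma lottery_supp_le_of_sum_le {y f c} :
  is_lottery y -> \sum_z y z * f z <= c -> (forall z, y z != 0 -> c <= f z) ->
  forall z, y z != 0 -> f z <= c.
Proof.
move=> [y_ge0 y_sum1] sum_le cf z yz.
have term_ge0 w : 0 <= y w * (f w - c).
  have [->|yw] := eqVneq (y w) 0; first by rewrite mul0r.
  by rewrite mulr_ge0 // subr_ge0 cf.
have sum0 : \sum_w y w * (f w - c) = 0.
  apply/eqP; rewrite eq_le sumr_ge0 // andbT.
  under eq_bigr => w _ do rewrite mulrBr.
  by rewrite sumrB -mulr_suml y_sum1 mul1r subr_le0.
move/eqP: (psumr_eq0P (fun w _ => term_ge0 w) sum0 (i := z) isT).
by rewrite mulf_eq0 (negbTE yz) subr_eq0 => /eqP ->.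
Qed.

Lemma lottery_sum_le_sep {x y f} c :
  is_lottery x -> is_lottery y ->
  (forall z, y z != 0 -> f z <= c) -> (forall z, x z != 0 -> c <= f z) ->
  \sum_z y z * f z <= \sum_z x z * f z.
Proof.
by move=> lx ly yc cx; apply: le_trans (lottery_sum_le ly yc) (lottery_sum_ge lx cx).
Qed.

Lemma UNIF_lottery {A : {set Z}} : A != set0 -> is_lottery (UNIF A : {ffun Z -> R}).
Proof.
move=> A_ne0; split.
  by move=> z; rewrite ffunE; case: ifP => // _; rewrite invr_ge0 ler0n.
under eq_bigr => z _ do rewrite ffunE.
rewrite -big_mkcond /= sumr_const -[_ *+ #|A|]mulr_natr mulVf //.
by rewrite pnatr_eq0 -lt0n card_gt0.
Qed.

Lemma UNIF_supp {A : {set Z}} {z} : (UNIF A : {ffun Z -> R}) z != 0 -> z \in A.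
Proof. by rewrite ffunE; case: ifP => //; rewrite eqxx. Qed.

End Lotteries.

Section XiNonempty.
Local Open Scope ring_scope.
Context {R : realFieldType} {I : finType} {Th : countType} {Z : finType}.
Context {F : Th -> {set Z}} {u : I -> Th -> Z -> R}.
Hypothesis F_neq0 : forall t, F t != set0.

Lemma iZt_max_sub i (A B : Z -> Prop) t' :
  (forall z, B z -> A z) -> (exists z, B z) ->
  iZt_max F u i A t' -> iZt_max F u i B t'.
Proof.
move=> BA B_ne [_ [AZ [A_i A_j]]]; split=> //; split; first by move=> z /BA /AZ.
split; first by move=> z /BA zA z' /BA; apply: A_i.
by move=> j ji z /BA; apply: A_j.
Qed.

Lemma hatL_supp_Zstar {i t y} :
  hatL F u i t y -> is_lottery y /\ forall z, y z != 0 -> Zstar F u z.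
Proof. by case=> [[_ [ly ysupp]] | [_ [[ly ysupp] _]]]; split=> // z /ysupp []. Qed.

Context {i : I} {t : Th}.
Hypothesis F_argmin : F_in_argmin F u i t.

Let E z := Zstar F u z /\ LZset u i (F t) t z.

Lemma F_sub_E {z} : z \in F t -> E z.
Proof.
move=> zF; split; first exact: (F_argmin _ zF).1.
by move=> z' z'F; apply: (F_argmin _ zF).2; exact: (F_argmin _ z'F).1.
Qed.

Lemma exists_mem_F : exists z0, z0 \in F t.
Proof. exact/set0Pn/F_neq0. Qed.

(* Without an element of Xi, agent i's hat set is the ordinary lower contour
   set of UNIF[F t]; as F t sits at the minimum over Z*, lotteries in it can
   only charge minimisers, i.e. points of E. *)
Lemma hatL_supp_E {y} :
  ~ Xi_nonempty F u i t -> hatL F u i t y -> forall z, y z != 0 -> E z.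
Proof.
move=> noXi y_hatL; have [ly yZ] := hatL_supp_Zstar y_hatL.
case: y_hatL => [[[_ [? _]] _] // | [_ [_ [_ y_le]]]].
have [z0 z0F] := exists_mem_F.
have [z0Z z0_min] := F_argmin _ z0F.
have unif_le : EU u i t (UNIF (F t)) <= u i t z0.
  apply: lottery_sum_le (UNIF_lottery (F_neq0 t)) _ => z /UNIF_supp zF.
  exact: (F_argmin _ zF).2.
have y_min := lottery_supp_le_of_sum_le ly (le_trans y_le unif_le)
  (fun z yz => z0_min z (yZ z yz)).
move=> z yz; split; first exact: yZ.
move=> z' z'F; apply: le_trans (y_min z yz) _.
exact: z0_min (F_argmin _ z'F).1.
Qed.

Lemma Lambda_E_sub_Theta :
  hatL_uniform_monotonicity F u -> ~ Xi_nonempty F u i t ->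
  forall t', Lambda F u i E t' -> Theta_it F u i t t'.
Proof.
move=> mono noXi t' Et'; have [z0 z0F] := exists_mem_F.
split; first by apply: iZt_max_sub Et'; [exact: @F_sub_E | exists z0].
apply: mono => j y y_hatL; have [ly yZ] := hatL_supp_Zstar y_hatL.
have unif_l : is_lottery (UNIF (F t) : {ffun Z -> R}) := UNIF_lottery (F_neq0 t).
split=> //; case: Et' => _ [_ [E_i E_j]]; have z0E := F_sub_E z0F.
have [ji|ji] := eqVneq j i; first subst j.
- apply: (lottery_sum_le_sep (u i t' z0)) => // z.
    by move/(hatL_supp_E noXi y_hatL); apply: E_i.
  by move/UNIF_supp/F_sub_E => zE; apply: E_i.
- apply: (lottery_sum_le_sep (u j t' z0)) => // z.
    by move/yZ; apply: E_j.
  by move/UNIF_supp/F_sub_E => zE; apply: E_j => //; case: z0E.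
Qed.

Definition Xi_candidate (K : Th -> Prop) : Prop :=
  [/\ exists t', K t', forall t', K t' -> Theta_it F u i t t'
    & forall t', K t' -> Lambda F u i (XiSet F u i t K) t'].

Definition Xi_refine (K : Th -> Prop) (t' : Th) : Prop :=
  Theta_it F u i t t' /\ Lambda F u i (XiSet F u i t K) t'.

Definition XiSet_fin (K : Th -> Prop) : {set Z} := [set z | `[< XiSet F u i t K z >]].

Lemma XiSet_ex K : (forall t', K t' -> Theta_it F u i t t') -> exists z, XiSet F u i t K z.
Proof.
move=> KT; have [z0 z0F] := exists_mem_F; have [z0Z z0L] := F_sub_E z0F.
by exists z0; split=> //; split=> // t' /KT [_ /subsetP]; apply.
Qed.

Lemma XiSet_refine_sub {K} z :
  Xi_candidate K -> XiSet F u i t (Xi_refine K) z -> XiSet F u i t K z.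
Proof.
case=> _ KT KL [zZ [zL zK]]; split=> //; split=> // t' Kt'.
by apply: zK; split; [apply: KT | apply: KL].
Qed.

Lemma Xi_refine_candidate {K} : Xi_candidate K -> Xi_candidate (Xi_refine K).
Proof.
move=> Kc; have [[t' Kt'] KT KL] := Kc.
have RT t'' : Xi_refine K t'' -> Theta_it F u i t t'' by case.
split=> //; first by exists t'; split; [apply: KT | apply: KL].
move=> t'' [_ L]; apply: iZt_max_sub L; last exact: XiSet_ex.
by move=> z; apply: XiSet_refine_sub.
Qed.

Lemma inXi_refine {K} :
  Xi_candidate K -> (forall z, XiSet F u i t K z -> XiSet F u i t (Xi_refine K) z) ->
  inXi F u i t (Xi_refine K).
Proof.
move=> Kc fixK; have [Rne RT RL] := Xi_refine_candidate Kc.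
split; first exact: RT; split=> // t'; split=> -[T L]; split=> //.
  by apply: iZt_max_sub L; [exact: fixK | apply: XiSet_ex; case: Kc].
apply: iZt_max_sub L; last exact: XiSet_ex.
by move=> z /XiSet_refine_sub; apply.
Qed.

Lemma Xi_nonempty_of_candidate K : Xi_candidate K -> Xi_nonempty F u i t.
Proof.
move: {2}#|XiSet_fin K| (erefl #|XiSet_fin K|) => n.
elim/ltn_ind: n K => n IH K cardK Kc.
have [fixK|/existsNP [z /not_implyP [zK zR]]] :=
  pselect (forall z, XiSet F u i t K z -> XiSet F u i t (Xi_refine K) z).
  by exists (Xi_refine K); apply: inXi_refine.
apply: (IH _ _ (Xi_refine K) erefl (Xi_refine_candidate Kc)); rewrite -cardK.
apply/proper_card/properP; split.
  by apply/subsetP => x; rewrite !inE => /asboolP xR; apply/asboolP/XiSet_refine_sub.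
by exists z; rewrite inE; apply/asboolP => //; apply: contra_not zR => /asboolP.
Qed.

End XiNonempty.

Theorem lemma10 (R : realFieldType) (I : finType) (Th : countType) (Z : finType)
  (F : Th -> {set Z}) (u : I -> Th -> Z -> R) :
  3 <= #|I| ->
  (forall t, F t != set0) ->
  hatL_uniform_monotonicity F u ->
  forall (i : I) (t : Th),
    F_in_argmin F u i t ->
    iZ_max F u i (fun z => Zstar F u z /\ LZset u i (F t) t z) ->
    Xi_nonempty F u i t.
Proof.
move=> _ F_neq0 mono i t F_argmin [t0 Et0].
set E := fun z => Zstar F u z /\ LZset u i (F t) t z in Et0.
have [//|noXi] := pselect (Xi_nonempty F u i t).
have ET : forall t', Lambda F u i E t' -> Theta_it F u i t t' :=
  Lambda_E_sub_Theta F_neq0 F_argmin mono noXi.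
apply: (Xi_nonempty_of_candidate F_neq0 F_argmin (Lambda F u i E)).
split; [by exists t0 | exact: ET |].
move=> t' Et'; apply: iZt_max_sub Et'; first by move=> z [zZ [zL _]].
exact: (XiSet_ex F_neq0 F_argmin _ ET).
Qed.
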